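(* Let $n\ge2$ and let $U^+$ be the subalgebra of $U_{r,s}(\mathfrak{so}_{2n+1})$ generated by $e_1,\dots,e_n$, with root vectors $\mathcal E_{i,j},\mathcal E_{i,j'}$ as in the context. Then in $U^+$: (1) $\mathcal E_{i,j}\mathcal E_{k,l}=\mathcal E_{k,l}\mathcal E_{i,j}$ for $i\le j$, $j+1<k\le l\le n$; (2) $\mathcal E_{i,j}\mathcal E_{k,l'}=\mathcal E_{k,l'}\mathcal E_{i,j}$ for $i\le j$, $j+1<k<l\le n$; (3) $\mathcal E_{i,j}=\mathcal E_{i,l-1}\mathcal E_{l,j}-r^2\mathcal E_{l,j}\mathcal E_{i,l-1}$ for $i<l\le j\le n$; (4) $\mathcal E_{i,j'}=\mathcal E_{i,l-1}\mathcal E_{l,j'}-r^2\mathcal E_{l,j'}\mathcal E_{i,l-1}$ for $i<l<j\le n$.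
   Context: Let $r,s\in\mathbb C^*$ with $r^3\ne s^3$, $r^4\ne s^4$, $\mathbb K=\mathbb Q(r,s)$. $U_{r,s}(\mathfrak{so}_{2n+1})$ is the $\mathbb K$-algebra generated by $e_i,f_i,\omega_i^{\pm1},\omega_i'^{\pm1}$ ($1\le i\le n$) with: $\omega$'s commute, invertible; $\omega_je_i\omega_j^{-1}=\langle\omega_i',\omega_j\rangle e_i$, $\omega_jf_i\omega_j^{-1}=\langle\omega_i',\omega_j\rangle^{-1}f_i$, $\omega_j'e_i\omega_j'^{-1}=\langle\omega_j',\omega_i\rangle^{-1}e_i$, $\omega_j'f_i\omega_j'^{-1}=\langle\omega_j',\omega_i\rangle f_i$, where $\langle\omega_i',\omega_i\rangle=r^2s^{-2}$ ($i<n$), $\langle\omega_n',\omega_n\rangle=rs^{-1}$, $\langle\omega_i',\omega_{i+1}\rangle=r^{-2}$, $\langle\omega_{i+1}',\omega_i\rangle=s^2$ ($i<n$), others $1$; $e_if_j-f_je_i=\delta_{ij}(\omega_i-\omega_i')/(r_i-s_i)$ ($r_i=r^2,s_i=s^2$ for $i<n$; $r_n=r,s_n=s$); Serre relations $(\mathrm{ad}_le_i)^{1-a_{ij}}(e_j)=0=(\mathrm{ad}_rf_i)^{1-a_{ij}}(f_j)$, $i\ne j$, with $(a_{ij})$ the $B_n$ Cartan matrix ($a_{ii}=2$, $a_{i,i+1}=a_{i+1,i}=-1$ for $i\le n-2$, $a_{n-1,n}=-1$, $a_{n,n-1}=-2$, else $0$), $\mathrm{ad}_l(a)(b)=\sum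 a_{(1)}bS(a_{(2)})$, $\mathrm{ad}_r(a)(b)=\sum S(a_{(1)})ba_{(2)}$, for the Hopf structure $\Delta(\omega)=\omega\otimes\omega$, $\Delta(e_i)=e_i\otimes1+\omega_i\otimes e_i$, $\Delta(f_i)=1\otimes f_i+f_i\otimes\omega_i'$, $S(e_i)=-\omega_i^{-1}e_i$, $S(f_i)=-f_i\omega_i'^{-1}$. (In $U^+$ the Serre relations amount to: $e_ie_j=e_je_i$ for $|i-j|>1$, $e_i\mathcal E_{i,i+1}=s^2\mathcal E_{i,i+1}e_i$ for $i<n$, $\mathcal E_{j,j+1}e_{j+1}=s^2e_{j+1}\mathcal E_{j,j+1}$ for $j<n-1$, $\mathcal E_{n-1,n'}e_n=s^2e_n\mathcal E_{n-1,n'}$.) Root vectors: $\mathcal E_{i,i}=e_i$, $\mathcal E_{i,j}=e_i\mathcal E_{i+1,j}-r^2\mathcal E_{i+1,j}e_i$ ($1\le i<j\le n$), $\mathcal E_{i,n'}=\mathcal E_{i,n}e_n-rs\,e_n\mathcal E_{i,n}$ ($i\le n-1$), $\mathcal E_{i,j'}=\mathcal E_{i,(j+1)'}e_j-s^{-2}e_j\mathcal E_{i,(j+1)'}$ ($1\le i<j\le n-1$). *)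

From mathcomp Require Import all_boot all_algebra.
Set Implicit Arguments. Unset Strict Implicit. Unset Printing Implicit Defensive.
Import GRing.Theory.
Local Open Scope ring_scope.

(* Root vectors of U^+ of U_{r,s}(so_{2n+1}), computed from the images
   e i (1 <= i <= n) of the generators in an F-algebra A. *)

(* rvE_aux r e d i = E_{i,i+d} *)
Fixpoint rvE_aux (F : fieldType) (A : algType F) (r : F) (e : nat -> A)
    (d i : nat) : A :=
  match d with
  | 0 => e i
  | d'.+1 => e i * rvE_aux r e d' i.+1 - r ^+ 2 *: (rvE_aux r e d' i.+1 * e i)
  end.

Definition rvE (F : fieldType) (A : algType F) (r : F) (e : nat -> A)
    (i j : nat) : A := rvE_aux r e (j - i)%N i.

(* rvEp_aux n r s e m i = E_{i,(n-m)'} *)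
Fixpoint rvEp_aux (F : fieldType) (A : algType F) (n : nat) (r s : F)
    (e : nat -> A) (m i : nat) : A :=
  match m with
  | 0 => rvE r e i n * e n - (r * s) *: (e n * rvE r e i n)
  | m'.+1 =>
      let j := (n - m'.+1)%N in
      rvEp_aux n r s e m' i * e j - s ^-2 *: (e j * rvEp_aux n r s e m' i)
  end.

(* E_{i,j'} for i < j <= n (and i <= n-1 when j = n) *)
Definition rvEp (F : fieldType) (A : algType F) (n : nat) (r s : F)
    (e : nat -> A) (i j : nat) : A := rvEp_aux n r s e (n - j)%N i.

Definition serre_Bn (F : fieldType) (A : algType F) (n : nat) (r s : F)
    (e : nat -> A) : Prop :=
  [/\ (forall i j : nat, (1 <= i)%N -> (j <= n)%N -> (i.+1 < j)%N ->
         e i * e j = e j * e i),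
      (forall i : nat, (1 <= i)%N -> (i < n)%N ->
         e i * rvE r e i i.+1 = s ^+ 2 *: (rvE r e i i.+1 * e i)),
      (forall j : nat, (1 <= j)%N -> (j.+1 < n)%N ->
         rvE r e j j.+1 * e j.+1 = s ^+ 2 *: (e j.+1 * rvE r e j j.+1))
    & rvEp n r s e n.-1 n * e n = s ^+ 2 *: (e n * rvEp n r s e n.-1 n)].

From mathcomp Require Import all_boot all_algebra.
From mathcomp Require Import zify.
Import GRing.Theory.
Local Open Scope ring_scope.

(* Only the first Serre relation is needed: every root vector is an iterated
   q-commutator of consecutive generators, so root vectors built from index
   ranges at distance at least 2 commute, and the splittings (3), (4) follow by
   induction from the q-Jacobi identity [qcommA], valid whenever the two outer
   arguments commute. *)

Section QCommutator.
Variables (F : fieldType) (A : algType F).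

Definition qcomm (q : F) (x y : A) : A := x * y - q *: (y * x).

Lemma commr_qcomm (x a b : A) (q : F) :
  GRing.comm x a -> GRing.comm x b -> GRing.comm x (qcomm q a b).
Proof.
move=> xa xb; apply: commrB; first exact: commrM.
by rewrite /GRing.comm -scalerAl -scalerAr (commrM xb xa).
Qed.

Lemma qcommA (a b c : A) (q1 q2 : F) : GRing.comm a c ->
  qcomm q2 (qcomm q1 a b) c = qcomm q1 a (qcomm q2 b c).
Proof.
move=> ac; rewrite /qcomm.
rewrite !(mulrBl, mulrBr, scalerBr, =^~ scalerAl, =^~ scalerAr, mulrA, scalerA).
rewrite -(mulrA b a c) ac -(mulrA c a b) -ac !mulrA -(mulrA b c a) -ac !mulrA.
rewrite (mulrC q2 q1) !opprB !addrA.
by rewrite [LHS]addrAC [RHS]addrAC (addrAC (a * b * c)).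
Qed.

End QCommutator.

Arguments qcomm {F A}.

Section RootVectors.
Variables (F : fieldType) (A : algType F) (r s : F) (n : nat) (e : nat -> A).

Lemma rvE_ii i : rvE r e i i = e i.
Proof. by rewrite /rvE subnn. Qed.

Lemma rvE_rec i j : (i < j)%N ->
  rvE r e i j = qcomm (r ^+ 2) (e i) (rvE r e i.+1 j).
Proof. by move=> ij; rewrite /rvE -(subnSK ij). Qed.

Lemma rvEp_n i : rvEp n r s e i n = qcomm (r * s) (rvE r e i n) (e n).
Proof. by rewrite /rvEp subnn. Qed.

Lemma rvEp_rec i j : (j < n)%N ->
  rvEp n r s e i j = qcomm (s ^-2) (rvEp n r s e i j.+1) (e j).
Proof.
move=> jn; rewrite /rvEp -(subnSK jn) /=.
by have -> : (n - (n - j.+1).+1 = j)%N by lia.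
Qed.

Lemma commr_rvE x i j : (i <= j)%N ->
    (forall t, (i <= t <= j)%N -> GRing.comm x (e t)) ->
  GRing.comm x (rvE r e i j).
Proof.
move=> ij; rewrite /rvE; move: (subnKC ij); move: (j - i)%N => d.
elim: d i {ij} => [|d IH] i dj xe /=; first by apply: xe; lia.
apply: commr_qcomm; first by apply: xe; lia.
by apply: IH => [|t ht]; [lia | apply: xe; lia].
Qed.

Lemma commr_rvEp x i j : (i <= j <= n)%N ->
    (forall t, (i <= t <= n)%N -> GRing.comm x (e t)) ->
  GRing.comm x (rvEp n r s e i j).
Proof.
move=> /andP[ij jn] xe; rewrite /rvEp.
have : (n - j <= n - i)%N by lia.
elim: (n - j)%N => [|m IH] mi /=.
  apply: commr_qcomm; last by apply: xe; lia.
  by apply: commr_rvE; [lia | move=> t ht; apply: xe; lia].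
by apply: commr_qcomm; [apply: IH; lia | apply: xe; lia].
Qed.

Hypothesis far_comm : forall i j : nat, (1 <= i)%N -> (j <= n)%N ->
  (i.+1 < j)%N -> GRing.comm (e i) (e j).

Lemma commr_rvE_e i j m : (1 <= i)%N -> (i <= j)%N -> (j.+1 < m)%N ->
  (m <= n)%N -> GRing.comm (rvE r e i j) (e m).
Proof.
move=> *; apply/commr_sym/commr_rvE => // t ht.
by apply/commr_sym/far_comm; lia.
Qed.

Lemma commr_rvE_rvE i j k l : (1 <= i)%N -> (i <= j)%N -> (j.+1 < k)%N ->
  (k <= l)%N -> (l <= n)%N -> GRing.comm (rvE r e i j) (rvE r e k l).
Proof. by move=> *; apply: commr_rvE => // t ht; apply: commr_rvE_e; lia. Qed.

Lemma commr_rvE_rvEp i j k l : (1 <= i)%N -> (i <= j)%N -> (j.+1 < k)%N ->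
  (k < l)%N -> (l <= n)%N -> GRing.comm (rvE r e i j) (rvEp n r s e k l).
Proof.
move=> *; apply: commr_rvEp; first lia.
by move=> t ht; apply: commr_rvE_e; lia.
Qed.

Lemma rvE_split i l j : (1 <= i)%N -> (i < l)%N -> (l <= j)%N -> (j <= n)%N ->
  rvE r e i j = qcomm (r ^+ 2) (rvE r e i l.-1) (rvE r e l j).
Proof.
move=> i1 il lj jn; have [d ld] : exists d, l = (i + d).+1.
  by exists (l - i.+1)%N; lia.
subst l; elim: d i i1 {il} lj => [|d IH] i i1 lj /=.
  by rewrite addn0 in lj *; rewrite rvE_ii rvE_rec.
rewrite (rvE_rec i j); last by lia.
rewrite addnS -addSn (IH i.+1) //; last by lia.
rewrite (rvE_rec i (i.+1 + d)); last by lia.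
rewrite /= qcommA //; apply/commr_rvE; first lia.
by move=> t ht; apply: far_comm; lia.
Qed.

Lemma rvEp_split i l j : (1 <= i)%N -> (i < l)%N -> (l < j)%N -> (j <= n)%N ->
  rvEp n r s e i j = qcomm (r ^+ 2) (rvE r e i l.-1) (rvEp n r s e l j).
Proof.
move=> i1 il lj jn; have [m jm] : exists m, j = (n - m)%N by exists (n - j)%N; lia.
subst j; elim: m lj jn => [|m IH] lj jn.
  rewrite subn0 !rvEp_n (rvE_split i l n); try lia.
  by rewrite qcommA //; apply: commr_rvE_e; lia.
have jn' : (n - m.+1 < n)%N by lia.
rewrite (rvEp_rec i _ jn') (rvEp_rec l _ jn') subnSK ?IH; try lia.
by rewrite qcommA //; apply: commr_rvE_e; lia.
Qed.

End RootVectors.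

Theorem lemma3p1 (F : fieldType) (r s : F) (n : nat) (A : algType F)
    (e : nat -> A) :
  [pchar F] =i pred0 ->
  r != 0 -> s != 0 -> r ^+ 3 != s ^+ 3 -> r ^+ 4 != s ^+ 4 ->
  (2 <= n)%N ->
  serre_Bn n r s e ->
  [/\ (forall i j k l : nat, (1 <= i)%N -> (i <= j)%N -> (j.+1 < k)%N ->
         (k <= l)%N -> (l <= n)%N ->
         rvE r e i j * rvE r e k l = rvE r e k l * rvE r e i j),
      (forall i j k l : nat, (1 <= i)%N -> (i <= j)%N -> (j.+1 < k)%N ->
         (k < l)%N -> (l <= n)%N ->
         rvE r e i j * rvEp n r s e k l = rvEp n r s e k l * rvE r e i j),
      (forall i l j : nat, (1 <= i)%N -> (i < l)%N -> (l <= j)%N -> (j <= n)%N ->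
         rvE r e i j = rvE r e i l.-1 * rvE r e l j
                         - r ^+ 2 *: (rvE r e l j * rvE r e i l.-1))
    & (forall i l j : nat, (1 <= i)%N -> (i < l)%N -> (l < j)%N -> (j <= n)%N ->
         rvEp n r s e i j = rvE r e i l.-1 * rvEp n r s e l j
                         - r ^+ 2 *: (rvEp n r s e l j * rvE r e i l.-1))].
Proof.
move=> _ _ _ _ _ _ [far_comm _ _ _]; split.
- exact: commr_rvE_rvE.
- exact: commr_rvE_rvEp.
- exact: rvE_split.
- exact: rvEp_split.
Qed.
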